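(* Let $R$ be a finite set of $n$ robots, with coordination space $\chi=\mathbb{R}^n$, obstacle region, dynamics, brake-safe set $B_G$ and control law $g^G$ as described in the context, and let $G$ be an acyclic directed graph on vertex set $R$. For each $i\in R$ let $\bar x_i:=\sup\{x_i: x\in\chi^{\mathrm{obs}}_{ij}\text{ for some } j\ne i\}$ (with $\bar x_i=-\infty$ if this set is empty). Then for every initial condition $s\in B_G$ there exists $T>0$ such that for all $i\in R$, $$\pi_{x,i}(\Phi(T,s,g^G))>\bar x_i.$$
   Context: Robots $i\in R$ move along fixed paths; $x_i\in\mathbb{R}$ is the curvilinear coordinate of robot $i$, $x=(x_i)_{i\in R}\in\chi:=\mathbb{R}^n$, and $\{\mathbf e_i\}$ is the canonical basis of $\chi$. For each unordered pair $\{i,j\}$, $\chi^{\mathrm{obs}}_{ij}\subset\chi$ (configurations where $i$ and $j$ collide) is an open cylinder of the form $C_{ij}+\mathrm{span}\{\mathbf e_k:k\ne i,j\}$ where $C_{ij}$ is an open bounded convex subset of $\mathrm{span}\{\mathbf e_i,\mathbf e_j\}$ (possibly empty); $\chi^{\mathrm{obs}}=\bigcup_{\{i,j\}}\chi^{\mathrm{obs}}_{ij}$. For $i\neq j$ define $\chi^{\mathrm{obs}}_{i\succ j}:=\chi^{\mathrm{obs}}_{ij}-\mathbb{R}_+\mathbf e_i+\mathbb{R}_+\mathbf e_j$ (Minkowski sum). A priority graph is a directed graph $G$ with vertex set $R$ and edge set $E(G)$; an edge $(i,j)$ means $i$ has priority over $j$. Set $\chi^{\mathrm{obs}}_G:=\bigcup_{(i,j)\in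 E(G)}\chi^{\mathrm{obs}}_{i\succ j}$, $\chi^{\mathrm{free}}_G:=\chi\setminus\chi^{\mathrm{obs}}_G$. Dynamics: robot $i$ has state $s_i=(x_i,v_i)\in S_i:=\mathbb{R}\times[0,\overline v_i]$ with speed limit $\overline v_i>0$, and $\dot x_i=v_i$, $\dot v_i=\mathbf u_i(t)\,\delta(\mathbf u_i(t),v_i(t))$, where $\delta(u,v)=0$ if ($v=0$ and $u<0$) or ($v=\overline v_i$ and $u>0$), and $\delta=1$ otherwise. Controls take values in $U_i=[\underline u_i,\overline u_i]$ with $\underline u_i<0<\overline u_i$ and are piecewise constant on each slot $[k,k+1)$, $k\in\mathbb{N}$; $\mathbf U_i$ is the set of such controls, $\mathbf U=\prod_i\mathbf U_i$, $S=\prod_i S_i$, $U=\prod_i U_i$. $\Phi_i(t,s_i,\mathbf u_i)$ is the resulting flow of robot $i$ from $s_i$, and $\Phi(t,s,\mathbf u)=(\Phi_i(t,s_i,\mathbf u_i))_i$. $\underline{\mathbf u}$ denotes the constant control equal to $(\underline u_i)_i$. $\pi_x(s)=x$, $\pi_{x,i}(s)=x_i$. Brake-safe states: $B_G:=\{s\in S:\ \pi_x(\Phi(t,s,\underline{\mathbf u}))\in\chi^{\mathrm{free}}_G\ \forall t\ge0\}$. Impulse control: $\mathbf u_i^{\mathrm{impulse}}(t)=\overline u_i$ for $t\in[0,1)$ and $=\underline u_i$ for $t\ge1$. Worst-case control w.r.t. $i$: $\tilde{\mathbf u}^i$ with $\tilde{\mathbf u}^i_i=\mathbf u_i^{\mathrm{impulse}}$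 and $\tilde{\mathbf u}^i_j$ the constant control $\underline u_j$ for $j\ne i$. Control law $g^G:S\to U$: $g^G_i(s)=\underline u_i$ if there exists $(j,i)\in E(G)$ and $t\ge0$ with $\pi_x(\Phi(t,s,\tilde{\mathbf u}^i))\in\chi^{\mathrm{obs}}_{j\succ i}$; otherwise $g^G_i(s)=\overline u_i$. For a feedback law $h:S\to U$, $\Phi(t,s,h)$ denotes $\Phi(t,s,\mathbf u)$ where $\mathbf u\in\mathbf U$ satisfies $\mathbf u(k)=h(\Phi(k,s,\mathbf u))$ for all $k\in\mathbb{N}$. *)

From Stdlib Require Import Reals Lra Relations ClassicalDescription.
From Coquelicot Require Import Coquelicot.
Open Scope R_scope.

(* Robots are indexed by natural numbers i < n.  A configuration x is a
   function nat -> R (only coordinates i < n are meaningful). *)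

(* C i j a b  <->  (x_i, x_j) = (a, b) lies in the open bounded convex set C_ij.
   chi^obs_ij = C_ij + span{e_k : k <> i,j} = { x | C i j (x i) (x j) }. *)
Definition open2 (P : R -> R -> Prop) : Prop :=
  forall a b, P a b -> exists eps, 0 < eps /\
    forall a' b', Rabs (a' - a) < eps -> Rabs (b' - b) < eps -> P a' b'.
Definition convex2 (P : R -> R -> Prop) : Prop :=
  forall a b a' b' l, 0 <= l <= 1 -> P a b -> P a' b' ->
    P (l * a + (1 - l) * a') (l * b + (1 - l) * b').
Definition bounded2 (P : R -> R -> Prop) : Prop :=
  exists M, forall a b, P a b -> Rabs a <= M /\ Rabs b <= M.

Definition obs (C : nat -> nat -> R -> R -> Prop) (i j : nat) (x : nat -> R) : Prop :=
  C i j (x i) (x j).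

(* chi^obs_{i > j} = chi^obs_ij - R_+ e_i + R_+ e_j :
   x in it  <->  exists a, b >= 0, x + a e_i - b e_j in chi^obs_ij *)
Definition obs_prio (C : nat -> nat -> R -> R -> Prop) (i j : nat) (x : nat -> R) : Prop :=
  exists a b, 0 <= a /\ 0 <= b /\ C i j (x i + a) (x j - b).

Definition obs_G (E : nat -> nat -> Prop) (C : nat -> nat -> R -> R -> Prop) (x : nat -> R) : Prop :=
  exists i j, E i j /\ obs_prio C i j x.

(* State s = (x, v). *)
Definition state := ((nat -> R) * (nat -> R))%type.
(* A control in U: robot i, slot k |-> value of u_i on [k, k+1). *)
Definition control := nat -> nat -> R.

(* Saturated velocity: solution of dv/dt = u * delta(u, v) started in [0, vb]
   with constant u is  v(tau) = max(0, min(vb, v0 + u tau)). *)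
Definition clampv (vb v : R) : R := Rmax 0 (Rmin vb v).
Definition vel_step (vb v0 u tau : R) : R := clampv vb (v0 + u * tau).
Definition pos_step (vb x0 v0 u tau : R) : R :=
  x0 + RInt (fun r => clampv vb (v0 + u * r)) 0 tau.

Definition step (vb : nat -> R) (s : state) (uk : nat -> R) (tau : R) : state :=
  (fun i => pos_step (vb i) (fst s i) (snd s i) (uk i) tau,
   fun i => vel_step (vb i) (snd s i) (uk i) tau).

Fixpoint state_at (vb : nat -> R) (s : state) (u : control) (k : nat) : state :=
  match k with
  | O => s
  | S k' => step vb (state_at vb s u k') (fun i => u i k') 1
  end.

Definition Phi (vb : nat -> R) (t : R) (s : state) (u : control) : state :=
  let k := Z.to_nat (Int_part t) in
  step vb (state_at vb s u k) (fun i => u i k) (t - IZR (Int_part t)).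

Definition brake (ulo : nat -> R) : control := fun i _ => ulo i.

Definition worst (ulo uhi : nat -> R) (i : nat) : control :=
  fun j k => if Nat.eqb j i then (if Nat.eqb k 0 then uhi i else ulo i) else ulo j.

Definition brake_safe (n : nat) (vb ulo : nat -> R) (E : nat -> nat -> Prop)
    (C : nat -> nat -> R -> R -> Prop) (s : state) : Prop :=
  (forall i, (i < n)%nat -> 0 <= snd s i <= vb i) /\
  forall t, 0 <= t -> ~ obs_G E C (fst (Phi vb t s (brake ulo))).

Definition gG (vb ulo uhi : nat -> R) (E : nat -> nat -> Prop)
    (C : nat -> nat -> R -> R -> Prop) (s : state) (i : nat) : R :=
  if excluded_middle_informative
       (exists j t, E j i /\ 0 <= t /\ obs_prio C j i (fst (Phi vb t s (worst ulo uhi i))))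
  then ulo i else uhi i.

(* Positions never decrease, so once every predecessor j
   of i has passed the (bounded) region C_ji, no worst-case manoeuvre of i can
   bring j back into it and g^G keeps i at full acceleration; the velocity then
   stays above min(vb_i, uhi_i) and x_i grows without bound.  Induction along
   the acyclic graph gives this for every robot, and a common slot past all
   bounds is a valid T. *)
From Stdlib Require Import Reals Lra Relations Classical ClassicalDescription Arith ZArith Lia.
From Coquelicot Require Import Coquelicot.
Open Scope R_scope.

Lemma clampv_lipschitz vb x y : Rabs (clampv vb x - clampv vb y) <= Rabs (x - y).
Proof.
  unfold clampv, Rmax, Rmin, Rabs.
  repeat (destruct (Rle_dec _ _) || destruct (Rcase_abs _)); lra.
Qed.

Lemma clampv_le vb x y : x <= y -> clampv vb x <= clampv vb y.
Proof. unfold clampv, Rmax, Rmin; intro; repeat destruct (Rle_dec _ _); lra. Qed.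

Lemma clampv_id vb v : 0 <= v <= vb -> clampv vb v = v.
Proof. unfold clampv, Rmax, Rmin; intro; repeat destruct (Rle_dec _ _); lra. Qed.

Lemma clampv_ge0 vb v : 0 <= clampv vb v.
Proof. apply Rmax_l. Qed.

Lemma continuous_clampv_affine vb v0 c r : continuous (fun r => clampv vb (v0 + c * r)) r.
Proof.
  apply continuity_pt_filterlim.
  apply (continuity_pt_comp (fun r => v0 + c * r) (clampv vb)).
  - apply continuity_pt_plus; [apply continuity_pt_const; now intros ? ?|].
    apply continuity_pt_mult; [apply continuity_pt_const; now intros ? ?|apply continuity_pt_id].
  - intros eps Heps; exists eps; split; [exact Heps|].
    intros y [_ Hy]; exact (Rle_lt_trans _ _ _ (clampv_lipschitz _ _ _) Hy).
Qed.

Lemma ex_RInt_clampv_affine vb v0 c a b : ex_RInt (fun r => clampv vb (v0 + c * r)) a b.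
Proof.
  apply (ex_RInt_continuous (V := R_CompleteNormedModule)).
  intros; apply continuous_clampv_affine.
Qed.

Lemma pos_step_ge vb x0 v0 c tau : 0 <= tau -> x0 <= pos_step vb x0 v0 c tau.
Proof.
  intro Htau; unfold pos_step.
  enough (0 <= RInt (fun r => clampv vb (v0 + c * r)) 0 tau) by lra.
  apply RInt_ge_0; [exact Htau | apply ex_RInt_clampv_affine | intros; apply clampv_ge0].
Qed.

Lemma pos_step_1_lower vb x0 v0 c w :
  0 <= c -> 0 <= w <= vb -> w <= v0 -> x0 + w <= pos_step vb x0 v0 c 1.
Proof.
  intros Hc Hw Hv; unfold pos_step.
  enough (Hint : RInt (fun _ => w) 0 1 <= RInt (fun r => clampv vb (v0 + c * r)) 0 1)
    by (rewrite RInt_const in Hint; unfold scal in Hint; simpl in Hint;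
        unfold mult in Hint; simpl in Hint; lra).
  apply RInt_le; [lra | apply ex_RInt_const | apply ex_RInt_clampv_affine |].
  intros r Hr; rewrite <- (clampv_id vb w Hw); apply clampv_le; nra.
Qed.

Lemma nat_archimedean r : exists m, r < INR m.
Proof.
  destruct (archimed r) as [Hup _].
  destruct (Z_lt_le_dec (up r) 0) as [Hneg|Hnonneg].
  - exists 0%nat; apply IZR_lt in Hneg; simpl; lra.
  - exists (Z.to_nat (up r)); rewrite INR_IZR_INZ, Z2Nat.id by lia; lra.
Qed.

Section Trajectory.
Variables (vb : nat -> R) (s : state) (u : control).
Notation X k i := (fst (state_at vb s u k) i).
Notation V k i := (snd (state_at vb s u k) i).

Lemma X_le_S k i : X k i <= X (S k) i.
Proof. apply pos_step_ge; lra. Qed.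

Lemma X_monotone k k' i : (k <= k')%nat -> X k i <= X k' i.
Proof. induction 1; [lra | pose proof (X_le_S m i); lra]. Qed.

Lemma Phi_INR_fst k i : fst (Phi vb (INR k) s u) i = X k i.
Proof.
  unfold Phi; rewrite Int_part_INR, Nat2Z.id; simpl; unfold pos_step.
  rewrite <- INR_IZR_INZ, Rminus_diag, RInt_point; unfold zero; simpl; ring.
Qed.

Lemma Phi_fst_ge_init t i : 0 <= t -> fst s i <= fst (Phi vb t s u) i.
Proof.
  intro Ht; unfold Phi; simpl.
  pose proof (base_Int_part t) as Hfrac.
  eapply Rle_trans;
    [apply (X_monotone 0 (Z.to_nat (Int_part t)) i (Nat.le_0_l _)) | apply pos_step_ge; lra].
Qed.

Lemma X_unbounded_under_constant_thrust i k0 c :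
  0 < vb i -> 0 < c -> (forall k, (k0 <= k)%nat -> u i k = c) ->
  forall K, exists k, K < X k i.
Proof.
  intros Hvb Hc Hu K.
  set (w := Rmin (vb i) c).
  assert (Hw : 0 < w <= vb i) by (unfold w, Rmin; destruct (Rle_dec _ _); lra).
  (* one slot makes the velocity nonnegative, thrust on the next lifts it to w *)
  assert (HV : forall p, w <= V (S (S (k0 + p))) i).
  { intro p; assert (Hv0 : 0 <= V (S (k0 + p)) i) by apply clampv_ge0.
    change (w <= clampv (vb i) (V (S (k0 + p)) i + u i (S (k0 + p)) * 1)).
    rewrite (Hu (S (k0 + p))) by lia.
    rewrite <- (clampv_id (vb i) w) by lra; apply clampv_le.
    unfold w, Rmin; destruct (Rle_dec _ _); lra. }
  assert (HX : forall p, X (S (S k0)) i + INR p * w <= X (S (S (k0 + p))) i).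
  { induction p as [|p IH].
    - rewrite Nat.add_0_r; simpl; lra.
    - replace (S (S (k0 + S p))) with (S (S (S (k0 + p)))) by lia.
      rewrite S_INR.
      enough (X (S (S (k0 + p))) i + w <= X (S (S (S (k0 + p)))) i) by lra.
      simpl; rewrite (Hu (S (S (k0 + p)))) by lia.
      apply pos_step_1_lower; [lra | lra | apply HV]. }
  destruct (nat_archimedean ((K - X (S (S k0)) i) / w)) as [p Hp].
  exists (S (S (k0 + p))); pose proof (HX p).
  apply (Rmult_lt_compat_r w) in Hp; [|lra].
  unfold Rdiv in Hp; rewrite Rmult_assoc, Rinv_l, Rmult_1_r in Hp; lra.
Qed.
End Trajectory.

Lemma eventually_forall_lt (P : nat -> nat -> Prop) m :
  (forall i k k', (k <= k')%nat -> P i k -> P i k') ->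
  (forall i, (i < m)%nat -> exists k, P i k) ->
  exists k, forall i, (i < m)%nat -> P i k.
Proof.
  intros Hmono Hex; induction m as [|m IH].
  - exists 0%nat; intros; lia.
  - destruct IH as [k1 Hk1]; [intros; apply Hex; lia|].
    destruct (Hex m) as [k2 Hk2]; [lia|].
    exists (Nat.max k1 k2); intros i Hi.
    destruct (Nat.eq_dec i m) as [->|Him].
    + apply (Hmono m k2); [lia | exact Hk2].
    + apply (Hmono i k1); [lia | apply Hk1; lia].
Qed.

Lemma acyclic_no_pred_closed_subset (E : nat -> nat -> Prop) n (S : nat -> Prop) :
  (forall i, ~ clos_trans nat E i i) -> (forall i, S i -> (i < n)%nat) ->
  (forall i, S i -> exists j, S j /\ E j i) -> forall i, ~ S i.
Proof.
  revert E S; induction n as [|n IH]; intros E S Hacyc Hn Hpred i Hi.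
  - specialize (Hn i Hi); lia.
  - (* delete vertex n, rerouting every path through it by a direct edge *)
    set (E' := fun j i => E j i \/ (E j n /\ E n i)).
    assert (Hacyc' : forall i, ~ clos_trans nat E' i i).
    { enough (Hsub : forall a b, clos_trans nat E' a b -> clos_trans nat E a b)
        by (intros k Hk; exact (Hacyc k (Hsub k k Hk))).
      induction 1 as [a b [H|[H1 H2]] | a b c _ IH1 _ IH2].
      - now apply t_step.
      - eapply t_trans; apply t_step; eauto.
      - eapply t_trans; eauto. }
    assert (Hloop : forall k, E k k -> False) by (intros k Hk; apply (Hacyc k), t_step, Hk).
    assert (Hpred' : forall k, S k -> k <> n -> exists j, (S j /\ j <> n) /\ E' j k).
    { intros k Hk Hkn; destruct (Hpred k Hk) as [p [Hp Hpk]].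
      destruct (Nat.eq_dec p n) as [->|Hpn].
      - destruct (Hpred n Hp) as [q [Hq Hqn]].
        destruct (Nat.eq_dec q n) as [->|Hq']; [exfalso; now apply (Hloop n)|].
        exists q; unfold E'; tauto.
      - exists p; unfold E'; tauto. }
    assert (HS' : forall k, ~ (S k /\ k <> n)).
    { apply (IH E' _ Hacyc').
      - intros k [Hk Hkn]; specialize (Hn k Hk); lia.
      - intros k [Hk Hkn]; apply Hpred'; assumption. }
    destruct (Nat.eq_dec i n) as [->|Hin]; [|now apply (HS' i)].
    destruct (Hpred n Hi) as [p [Hp Hpn]].
    destruct (Nat.eq_dec p n) as [->|Hp']; [exfalso; now apply (Hloop n)|].
    now apply (HS' p).
Qed.

Lemma acyclic_ind (E : nat -> nat -> Prop) n (P : nat -> Prop) :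
  (forall i, ~ clos_trans nat E i i) -> (forall j i, E j i -> (j < n)%nat) ->
  (forall i, (i < n)%nat -> (forall j, E j i -> P j) -> P i) ->
  forall i, (i < n)%nat -> P i.
Proof.
  intros Hacyc HE Hstep i Hi; apply NNPP; intro HPi.
  apply (acyclic_no_pred_closed_subset E n (fun i => (i < n)%nat /\ ~ P i) Hacyc)
    with (i := i); [tauto | | tauto].
  intros k [Hk HPk]; apply NNPP; intro Hnone; apply HPk, Hstep; [exact Hk|].
  intros j Hjk; apply NNPP; intro HPj; apply Hnone; exists j; eauto.
Qed.

Lemma gG_accelerates vb ulo uhi E C s' i :
  (forall j a b, E j i -> C j i a b -> a < fst s' j) -> gG vb ulo uhi E C s' i = uhi i.
Proof.
  intro Hpast; unfold gG.
  destruct (excluded_middle_informative _) as [[j [t [Hji [Ht [a [b [Ha [_ Hab]]]]]]]]|];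
    [exfalso | reflexivity].
  pose proof (Hpast j _ _ Hji Hab).
  pose proof (Phi_fst_ge_init vb s' (worst ulo uhi i) t j Ht); lra.
Qed.

Section Liveness.
Variables (n : nat) (vb ulo uhi : nat -> R) (C : nat -> nat -> R -> R -> Prop)
  (E : nat -> nat -> Prop) (s : state) (u : control).
Hypothesis Hvb : forall i, (i < n)%nat -> 0 < vb i.
Hypothesis Huhi : forall i, (i < n)%nat -> 0 < uhi i.
Hypothesis Hbdd : forall i j, (i < n)%nat -> (j < n)%nat -> i <> j -> bounded2 (C i j).
Hypothesis HE : forall i j, E i j -> (i < n)%nat /\ (j < n)%nat.
Hypothesis Hacyc : forall i, ~ clos_trans nat E i i.
Hypothesis Hfb : forall i k, (i < n)%nat ->
  u i k = gG vb ulo uhi E C (Phi vb (INR k) s u) i.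
Notation X k i := (fst (state_at vb s u k) i).

Lemma X_unbounded i : (i < n)%nat -> forall K, exists k, K < X k i.
Proof.
  revert i; apply (acyclic_ind E n (fun i => forall K, exists k, K < X k i));
    [exact Hacyc | intros j k Hjk; apply (HE j k Hjk) |].
  intros i Hi IHpred.
  assert (Hpast : exists k0, forall j, (j < n)%nat ->
            E j i -> forall a b, C j i a b -> a < X k0 j).
  { apply eventually_forall_lt.
    - intros j k k' Hkk' Hk Hji a b Hab.
      pose proof (X_monotone vb s u k k' j Hkk'); pose proof (Hk Hji a b Hab); lra.
    - intros j Hj; destruct (classic (E j i)) as [Hji|Hji]; [|exists 0%nat; tauto].
      assert (Hneq : j <> i) by (intros ->; apply (Hacyc i), t_step, Hji).
      destruct (Hbdd j i Hj Hi Hneq) as [M HM].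
      destruct (IHpred j Hji M) as [k Hk]; exists k; intros _ a b Hab.
      destruct (HM a b Hab); pose proof (Rle_abs a); lra. }
  destruct Hpast as [k0 Hk0].
  apply (X_unbounded_under_constant_thrust vb s u i k0 (uhi i) (Hvb i Hi) (Huhi i Hi)).
  intros k Hk; rewrite (Hfb i k Hi); apply gG_accelerates.
  intros j a b Hji Hab; rewrite Phi_INR_fst.
  pose proof (X_monotone vb s u k0 k j Hk).
  pose proof (Hk0 j (proj1 (HE j i Hji)) Hji a b Hab); lra.
Qed.

Lemma obstacle_bound i : (i < n)%nat ->
  exists M, forall j a b, (j < n)%nat -> j <> i -> C i j a b -> a <= INR M.
Proof.
  intro Hi.
  destruct (eventually_forall_lt (fun j M => j <> i -> forall a b, C i j a b -> a <= INR M) n)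
    as [M HM].
  - intros j M M' HMM' HM Hji a b Hab; apply le_INR in HMM'; pose proof (HM Hji a b Hab); lra.
  - intros j Hj; destruct (Nat.eq_dec j i) as [->|Hji]; [exists 0%nat; tauto|].
    destruct (Hbdd i j Hi Hj (not_eq_sym Hji)) as [B HB].
    destruct (nat_archimedean B) as [M HM]; exists M; intros _ a b Hab.
    destruct (HB a b Hab); pose proof (Rle_abs a); lra.
  - exists M; intros j a b Hj Hji; apply HM; assumption.
Qed.

Lemma eventually_past_all_obstacles : exists k, forall i, (i < n)%nat ->
  exists M, M < X k i /\ forall j a b, (j < n)%nat -> j <> i -> C i j a b -> a <= M.
Proof.
  apply eventually_forall_lt.
  - intros i k k' Hkk' [M [HMk HM]]; exists M; split; [|exact HM].
    pose proof (X_monotone vb s u k k' i Hkk'); lra.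
  - intros i Hi; destruct (obstacle_bound i Hi) as [M HM].
    destruct (X_unbounded i Hi (INR M)) as [k Hk]; eauto.
Qed.
End Liveness.

Theorem theorem3
  (n : nat) (vb ulo uhi : nat -> R)
  (C : nat -> nat -> R -> R -> Prop) (E : nat -> nat -> Prop)
  (Hvb : forall i, (i < n)%nat -> 0 < vb i)
  (Hu : forall i, (i < n)%nat -> ulo i < 0 < uhi i)
  (HC : forall i j, (i < n)%nat -> (j < n)%nat -> i <> j ->
          open2 (C i j) /\ convex2 (C i j) /\ bounded2 (C i j))
  (Hsym : forall i j a b, (i < n)%nat -> (j < n)%nat -> (C i j a b <-> C j i b a))
  (HE : forall i j, E i j -> (i < n)%nat /\ (j < n)%nat)
  (Hacyc : forall i, ~ clos_trans nat E i i)
  (s : state) (Hs : brake_safe n vb ulo E C s)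
  (u : control)
  (Hfb : forall i k, (i < n)%nat ->
           u i k = gG vb ulo uhi E C (Phi vb (INR k) s u) i) :
  exists T, 0 < T /\
    forall i, (i < n)%nat ->
      exists M, M < fst (Phi vb T s u) i /\
        forall j a b, (j < n)%nat -> j <> i -> C i j a b -> a <= M.
Proof.
  destruct (eventually_past_all_obstacles n vb ulo uhi C E s u Hvb
              (fun i Hi => proj2 (Hu i Hi))
              (fun i j Hi Hj Hij => proj2 (proj2 (HC i j Hi Hj Hij))) HE Hacyc Hfb)
    as [k Hk].
  exists (INR (S k)); split; [apply lt_0_INR; lia|].
  intros i Hi; destruct (Hk i Hi) as [M [HMk HM]]; exists M; split; [|exact HM].
  rewrite Phi_INR_fst; pose proof (X_le_S vb s u k i); lra.
Qed.
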